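(* Let $\Omega\subset\mathbb{R}^n$, $\mathcal J=\{1,\dots,n\}$, $k$ a kernel satisfying the standing assumptions in the context, $u\in H_k(\Omega)$, and let $(x_i,\ell_i)$, $e_m$, $P_m$ be produced by the $f$-greedy algorithm as in the context. With $a_i:=|\partial_{\ell_{i+1}}e_i(x_{i+1})|$ and $b_i:=P_i(x_{i+1},\ell_{i+1})$ (and $a_i/b_i:=0$ whenever $b_i=0$), for any $m\ge1$, \[ \left[\prod_{i=m+1}^{2m}\frac{a_i}{b_i}\right]^{1/m}\le m^{-1/2}\,\|e_{m+1}\|_{H_k(\Omega)}. \]
   Context: $k:\Omega\times\Omega\to\mathbb{R}$ is a symmetric positive definite kernel with RKHS $H_k(\Omega)$, $k\in C^2(\Omega\times\Omega)$, and for all $x\in\Omega$, $\ell\in\mathcal J$, $\partial^{(2)}_\ell k(\cdot,x)\in H_k(\Omega)$ (derivative in the second argument) with $\partial_\ell f(x)=\langle f,\partial^{(2)}_\ell k(\cdot,x)\rangle_{H_k(\Omega)}$ for all $f\in H_k(\Omega)$. For a selection $\{(x_i,\ell_i)\}_{i=1}^m\subset\Omega\times\mathcal J$, $V_m:=\operatorname{span}\{\partial^{(2)}_{\ell_i}k(\cdot,x_i)\}_{i=1}^m$ ($V_0=\{0\}$), $\Pi_m$ is the orthogonal projector onto $V_m$, $s_m:=\Pi_mu$, $e_m:=u-s_m$. The $f$-greedy algorithm starts at $m=0$ and for $m\ge0$ chooses $(x_{m+1},\ell_{m+1})\in\operatorname{argmax}_{x\in\Omega,\ell\in\mathcal J}|\partial_\ell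 e_m(x)|$. Power function: $P_m(x,\ell):=\|(I-\Pi_m)\partial^{(2)}_\ell k(\cdot,x)\|_{H_k(\Omega)}$. *)

From HB Require Import structures.
From mathcomp Require Import all_boot all_order all_algebra.
From mathcomp Require Import all_classical all_reals all_analysis.
Import Order.TTheory GRing.Theory Num.Theory numFieldNormedType.Exports.

Set Implicit Arguments.
Unset Strict Implicit.
Unset Printing Implicit Defensive.

Local Open Scope classical_set_scope.
Local Open Scope ring_scope.

Section KernelDefs.
Context {R : realType} {n : nat}.
Local Notation V := 'rV[R]_n.

Definition unitv (l : 'I_n) : V := delta_mx 0 l.

Definition pderiv (l : 'I_n) (f : V -> R) (x : V) : R := 'D_(unitv l) f x.

Definition C2_on {W : normedModType R} (U : set W) (f : W -> R) : Prop :=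
  forall p, U p -> forall v w : W,
    [/\ derivable f p v, derivable ('D_v f) p w, {for p, continuous f},
        {for p, continuous ('D_v f)} & {for p, continuous ('D_w ('D_v f))}].

Definition sym_kernel_on (Om : set V) (k : V -> V -> R) : Prop :=
  forall x y, Om x -> Om y -> k x y = k y x.

Definition pd_kernel_on (Om : set V) (k : V -> V -> R) : Prop :=
  forall (N : nat) (pts : 'I_N -> V) (c : 'I_N -> R),
    (forall i, Om (pts i)) -> injective pts -> (exists i, c i != 0) ->
    0 < \sum_(i < N) \sum_(j < N) c i * c j * k (pts i) (pts j).

(* functions on Om are represented as functions on R^n vanishing off Om *)
Definition restr (Om : set V) (f : V -> R) : V -> R :=
  fun y => if `[< Om y >] then f y else 0.

Definition ksec (Om : set V) (k : V -> V -> R) (x : V) : V -> R :=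
  restr Om (fun y => k y x).

Definition dksec (Om : set V) (k : V -> V -> R) (l : 'I_n) (x : V) : V -> R :=
  restr Om (fun y => pderiv l (k y) x).

Definition fsub (f g : V -> R) : V -> R := fun y => f y - g y.

Definition fnorm (ip : (V -> R) -> (V -> R) -> R) (f : V -> R) : R :=
  Num.sqrt (ip f f).

Record is_RKHS (Om : set V) (k : V -> V -> R) (Hs : set (V -> R))
    (ip : (V -> R) -> (V -> R) -> R) : Prop := {
  rkhs_supp : forall f, Hs f -> forall y, ~ Om y -> f y = 0;
  rkhs_zero : Hs (fun=> 0);
  rkhs_add : forall f g, Hs f -> Hs g -> Hs (fun y => f y + g y);
  rkhs_scale : forall (a : R) f, Hs f -> Hs (fun y => a * f y);
  rkhs_sym : forall f g, Hs f -> Hs g -> ip f g = ip g f;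
  rkhs_lin : forall (a : R) f g h, Hs f -> Hs g -> Hs h ->
      ip (fun y => a * f y + g y) h = a * ip f h + ip g h;
  rkhs_pos : forall f, Hs f -> 0 <= ip f f;
  rkhs_def : forall f, Hs f -> ip f f = 0 -> f = (fun=> 0);
  rkhs_complete : forall s : nat -> (V -> R), (forall p, Hs (s p)) ->
      (forall eps : R, 0 < eps -> exists N : nat, forall p q : nat,
          (N <= p)%N -> (N <= q)%N -> fnorm ip (fsub (s p) (s q)) < eps) ->
      exists g, Hs g /\ (forall eps : R, 0 < eps -> exists N : nat,
          forall p : nat, (N <= p)%N -> fnorm ip (fsub (s p) g) < eps);
  rkhs_ksec : forall x, Om x -> Hs (ksec Om k x);
  rkhs_reprod : forall f x, Hs f -> Om x -> f x = ip f (ksec Om k x)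
}.

Definition deriv_reproducing (Om : set V) (k : V -> V -> R) (Hs : set (V -> R))
    (ip : (V -> R) -> (V -> R) -> R) : Prop :=
  forall x l, Om x -> Hs (dksec Om k l x) /\
    forall f, Hs f -> pderiv l f x = ip f (dksec Om k l x).

(* V_m = span { d^{(2)}_{l_i} k(., x_i) : 1 <= i <= m } ; V_0 = {0} *)
Definition inVm (Om : set V) (k : V -> V -> R) (X : nat -> V) (L : nat -> 'I_n)
    (m : nat) (f : V -> R) : Prop :=
  exists c : nat -> R,
    f = fun y => \sum_(1 <= i < m.+1) c i * dksec Om k (L i) (X i) y.

Definition orth_projs (Om : set V) (k : V -> V -> R) (Hs : set (V -> R))
    (ip : (V -> R) -> (V -> R) -> R) (X : nat -> V) (L : nat -> 'I_n)
    (Pi : nat -> (V -> R) -> (V -> R)) : Prop :=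
  forall m f, Hs f -> inVm Om k X L m (Pi m f) /\
    forall g, inVm Om k X L m g -> ip (fsub f (Pi m f)) g = 0.

Definition err (Pi : nat -> (V -> R) -> (V -> R)) (u : V -> R) (m : nat) : V -> R :=
  fsub u (Pi m u).

Definition fgreedy (Om : set V) (Pi : nat -> (V -> R) -> (V -> R)) (u : V -> R)
    (X : nat -> V) (L : nat -> 'I_n) : Prop :=
  forall m : nat, Om (X m.+1) /\
    forall x l, Om x ->
      `|pderiv l (err Pi u m) x| <= `|pderiv (L m.+1) (err Pi u m) (X m.+1)|.

Definition powerf (Om : set V) (k : V -> V -> R) (ip : (V -> R) -> (V -> R) -> R)
    (Pi : nat -> (V -> R) -> (V -> R)) (m : nat) (x : V) (l : 'I_n) : R :=
  fnorm ip (fsub (dksec Om k l x) (Pi m (dksec Om k l x))).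

Definition quot0 (a b : R) : R := if b == 0 then 0 else a / b.

End KernelDefs.

From HB Require Import structures.
From mathcomp Require Import all_boot all_order all_algebra.
From mathcomp Require Import all_classical all_reals all_analysis.
From mathcomp Require Import ring lra.
Import Order.TTheory GRing.Theory Num.Theory numFieldNormedType.Exports.
Local Open Scope classical_set_scope.
Local Open Scope ring_scope.

(* Write [d] for the new basis function d^{(2)}_{l_{i+1}} k(., x_{i+1}) and
   [w := (I - Pi_i) d].  The reproducing property gives
   a_i = <e_i, d> = <e_i, w> = <e_i - e_{i+1}, w>, because e_i is orthogonal
   to V_i and e_{i+1} to V_{i+1}, both of which contain Pi_i d, w.  As
   b_i = ||w||, Cauchy-Schwarz and Pythagoras give
   (a_i / b_i)^2 <= ||e_i - e_{i+1}||^2 = ||e_i||^2 - ||e_{i+1}||^2.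
   Telescoping over m < i <= 2m bounds the sum of the (a_i / b_i)^2 by
   ||e_{m+1}||^2, and AM-GM turns this into the bound on the geometric mean. *)

Section RKHSInnerProduct.
Context {R : realType} {n : nat} {Om : set 'rV[R]_n}
  {k : 'rV[R]_n -> 'rV[R]_n -> R}
  {Hs : set ('rV[R]_n -> R)} {ip : ('rV[R]_n -> R) -> ('rV[R]_n -> R) -> R}.
Hypothesis HR : is_RKHS Om k Hs ip.

Lemma fsubE (f g : 'rV[R]_n -> R) : fsub f g = (fun y => (-1) * g y + f y).
Proof. by apply/funext => y; rewrite /fsub mulN1r addrC. Qed.

Lemma rkhs_sub {f g} : Hs f -> Hs g -> Hs (fsub f g).
Proof. by move=> Hf Hg; rewrite fsubE; exact: (rkhs_add HR (rkhs_scale HR _ Hg) Hf). Qed.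

Lemma ip_subl {f g h} : Hs f -> Hs g -> Hs h -> ip (fsub f g) h = ip f h - ip g h.
Proof. by move=> Hf Hg Hh; rewrite fsubE (rkhs_lin HR) // mulN1r addrC. Qed.

Lemma ip_subr {f g h} : Hs f -> Hs g -> Hs h -> ip h (fsub f g) = ip h f - ip h g.
Proof.
move=> Hf Hg Hh.
by rewrite (rkhs_sym HR Hh (rkhs_sub Hf Hg)) ip_subl // !(rkhs_sym HR _ Hh).
Qed.

Lemma ip_sub_orth {f g} : Hs f -> Hs g -> ip g (fsub f g) = 0 ->
  ip (fsub f g) (fsub f g) = ip f f - ip g g.
Proof.
move=> Hf Hg; rewrite ip_subr // => fg_gg.
have Hfg := rkhs_sub Hf Hg.
rewrite ip_subl // !ip_subr //; have := rkhs_sym HR Hg Hf; lra.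
Qed.

(* Cauchy-Schwarz, from the positivity of ||h - t w||^2 at the optimal t. *)
Lemma ip_sqr_div_le {h w} : Hs h -> Hs w -> 0 < ip w w ->
  ip h w ^+ 2 / ip w w <= ip h h.
Proof.
move=> Hh Hw ww_gt0; set t := ip h w / ip w w.
pose g y := - t * w y + h y.
have Hg : Hs g by exact: (rkhs_add HR (rkhs_scale HR _ Hw) Hh).
have wg0 : ip w g = 0.
  rewrite (rkhs_sym HR Hw Hg) /g (rkhs_lin HR) // /t.
  by field; rewrite gt_eqF.
have hg : ip h g = ip h h - t * ip h w.
  rewrite (rkhs_sym HR Hh Hg) /g (rkhs_lin HR) // (rkhs_sym HR Hw Hh); ring.
have := rkhs_pos HR Hg; rewrite {1}/g (rkhs_lin HR) // wg0 hg mulr0 add0r /t.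
by rewrite expr2 mulrAC; lra.
Qed.

Lemma quot0_ip_fnorm_ge0 h w : 0 <= quot0 `|ip h w| (fnorm ip w).
Proof.
by rewrite /quot0; case: ifP => // _; rewrite divr_ge0 ?sqrtr_ge0.
Qed.

Lemma quot0_ip_fnorm_sqr_le {h w} : Hs h -> Hs w ->
  quot0 `|ip h w| (fnorm ip w) ^+ 2 <= ip h h.
Proof.
move=> Hh Hw; rewrite /quot0 /fnorm; case: ifP => [_|/negbT nw_neq0].
  by rewrite expr0n /=; exact: (rkhs_pos HR Hh).
have ww_gt0 : 0 < ip w w.
  rewrite lt_def (rkhs_pos HR Hw) andbT; apply: contra nw_neq0 => /eqP ->.
  by rewrite sqrtr0.
rewrite expr_div_n sqr_sqrtr ?(ltW ww_gt0) // real_normK ?num_real //.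
exact: ip_sqr_div_le.
Qed.

End RKHSInnerProduct.

Section GreedySpaces.
Context {R : realType} {n : nat} {Om : set 'rV[R]_n}
  {k : 'rV[R]_n -> 'rV[R]_n -> R}
  {Hs : set ('rV[R]_n -> R)} {ip : ('rV[R]_n -> R) -> ('rV[R]_n -> R) -> R}
  {X : nat -> 'rV[R]_n} {L : nat -> 'I_n}.
Hypothesis HR : is_RKHS Om k Hs ip.
Hypothesis HD : deriv_reproducing Om k Hs ip.
Hypothesis HX : forall i, Om (X i.+1).

Lemma dksec_rkhs i : Hs (dksec Om k (L i.+1) (X i.+1)).
Proof. exact: (HD (X i.+1) (L i.+1) (HX i)).1. Qed.

Lemma inVm_rkhs {m f} : inVm Om k X L m f -> Hs f.
Proof.
case=> c ->; elim: m => [|m IH].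
  under eq_fun do rewrite big_geq //.
  exact: rkhs_zero HR.
under eq_fun do rewrite big_nat_recr //= addrC.
exact: (rkhs_add HR (rkhs_scale HR _ (dksec_rkhs m)) IH).
Qed.

Lemma inVm_sub {m f g} : inVm Om k X L m f -> inVm Om k X L m g ->
  inVm Om k X L m (fsub f g).
Proof.
case=> c -> [d ->]; exists (fun i => c i - d i); apply/funext => y.
by rewrite /fsub -sumrB; apply: eq_bigr => i _; rewrite mulrBl.
Qed.

Lemma inVmS {m f} : inVm Om k X L m f -> inVm Om k X L m.+1 f.
Proof.
case=> c ->; exists (fun i => if i == m.+1 then 0 else c i); apply/funext => y.
rewrite [RHS]big_nat_recr //= eqxx mul0r addr0.
by apply: eq_big_nat => i /andP[_ lt_im]; rewrite ltn_eqF.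
Qed.

Lemma inVm_dksec m : inVm Om k X L m.+1 (dksec Om k (L m.+1) (X m.+1)).
Proof.
exists (fun i => (i == m.+1)%:R); apply/funext => y.
rewrite [RHS]big_nat_recr //= eqxx mul1r big_nat_cond big1 ?add0r // => i.
by case/andP=> /andP[_ lt_im] _; rewrite ltn_eqF ?mul0r.
Qed.

Context {Pi : nat -> ('rV[R]_n -> R) -> ('rV[R]_n -> R)} {u : 'rV[R]_n -> R}.
Hypothesis HO : orth_projs Om k Hs ip X L Pi.
Hypothesis Hu : Hs u.

Lemma proj_rkhs i {f} : Hs f -> Hs (Pi i f).
Proof. by move=> Hf; apply: inVm_rkhs (HO i f Hf).1. Qed.

Lemma err_rkhs i : Hs (err Pi u i).
Proof. exact: (rkhs_sub HR Hu (proj_rkhs i Hu)). Qed.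

Lemma ip_err_inVm {i g} : inVm Om k X L i g -> ip (err Pi u i) g = 0.
Proof. exact: (HO i u Hu).2. Qed.

Lemma err_sub_errS_inVm i : inVm Om k X L i.+1 (fsub (err Pi u i) (err Pi u i.+1)).
Proof.
have -> : fsub (err Pi u i) (err Pi u i.+1) = fsub (Pi i.+1 u) (Pi i u).
  by apply/funext => y; rewrite /err /fsub; ring.
exact: inVm_sub (HO i.+1 u Hu).1 (inVmS (HO i u Hu).1).
Qed.

Lemma ip_err_sub_errS i :
  ip (fsub (err Pi u i) (err Pi u i.+1)) (fsub (err Pi u i) (err Pi u i.+1)) =
  ip (err Pi u i) (err Pi u i) - ip (err Pi u i.+1) (err Pi u i.+1).
Proof.
apply: (ip_sub_orth HR (err_rkhs i) (err_rkhs i.+1)).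
exact: ip_err_inVm (err_sub_errS_inVm i).
Qed.

Lemma pderiv_err_ip i (d := dksec Om k (L i.+1) (X i.+1)) :
  pderiv (L i.+1) (err Pi u i) (X i.+1) =
  ip (fsub (err Pi u i) (err Pi u i.+1)) (fsub d (Pi i d)).
Proof.
have Hd : Hs d := dksec_rkhs i.
have [Hei HeiS] := (err_rkhs i, err_rkhs i.+1).
have w_inVm : inVm Om k X L i.+1 (fsub d (Pi i d)).
  exact: inVm_sub (inVm_dksec i) (inVmS (HO i d Hd).1).
rewrite ((HD (X i.+1) (L i.+1) (HX i)).2 _ Hei) -/d.
have HPd : Hs (Pi i d) := proj_rkhs i Hd.
rewrite (ip_subl HR Hei HeiS (rkhs_sub HR Hd HPd)) (ip_err_inVm w_inVm) subr0.
by rewrite (ip_subr HR Hd HPd Hei) (ip_err_inVm (HO i d Hd).1) subr0.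
Qed.

Lemma quot0_greedy_ge0 i :
  0 <= quot0 `|pderiv (L i.+1) (err Pi u i) (X i.+1)|
             (powerf Om k ip Pi i (X i.+1) (L i.+1)).
Proof. by rewrite pderiv_err_ip; exact: quot0_ip_fnorm_ge0. Qed.

Lemma quot0_greedy_sqr_le i :
  quot0 `|pderiv (L i.+1) (err Pi u i) (X i.+1)|
        (powerf Om k ip Pi i (X i.+1) (L i.+1)) ^+ 2 <=
  ip (err Pi u i) (err Pi u i) - ip (err Pi u i.+1) (err Pi u i.+1).
Proof.
rewrite pderiv_err_ip /powerf -ip_err_sub_errS.
apply: (quot0_ip_fnorm_sqr_le HR).
  exact: (rkhs_sub HR (err_rkhs i) (err_rkhs i.+1)).
exact: (rkhs_sub HR (dksec_rkhs i) (proj_rkhs i (dksec_rkhs i))).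
Qed.

End GreedySpaces.

Section GeometricMeanBound.
Context {R : realType}.

Lemma telescope_sqr_sum_le (q N : nat -> R) a b :
  (forall i, q i ^+ 2 <= N i - N i.+1) -> (a <= b)%N ->
  \sum_(a <= i < b) q i ^+ 2 <= N a - N b.
Proof.
move=> qN; elim: b => [|b IH].
  by rewrite leqn0 => /eqP ->; rewrite big_geq ?subrr.
rewrite leq_eqVlt => /orP[/eqP ->|lt_ab]; first by rewrite big_geq ?subrr.
by rewrite big_nat_recr //=; have := IH lt_ab; have := qN b; lra.
Qed.

Lemma prod_le_mean_expn (E : nat -> R) a m : (forall i, 0 <= E i) ->
  \prod_(a <= i < a + m) E i <= ((\sum_(a <= i < a + m) E i) / m%:R) ^+ m.
Proof.
move=> E_ge0; rewrite -{1 3}[a]add0n !big_addn addKn !big_mkord.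
have := leif_AGM (A := predT) (E := fun i : 'I_m => E (i + a)%N).
by rewrite cardT size_enum_ord => AGM; apply/leif_le/AGM.
Qed.

Lemma prod_sqr_le_telescope (q N : nat -> R) a m :
  (forall i, 0 <= q i) -> (forall i, 0 <= N i) ->
  (forall i, q i ^+ 2 <= N i - N i.+1) ->
  (\prod_(a <= i < a + m) q i) ^+ 2 <= (N a / m%:R) ^+ m.
Proof.
move=> q_ge0 N_ge0 qN; rewrite -prodrXl.
apply: le_trans (prod_le_mean_expn (fun i => q i ^+ 2) a m (fun i => sqr_ge0 (q i))) _.
have sq_ge0 : 0 <= \sum_(a <= i < a + m) q i ^+ 2.
  by apply: sumr_ge0 => i _; exact: sqr_ge0.
have sq_le : \sum_(a <= i < a + m) q i ^+ 2 <= N a.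
  have := telescope_sqr_sum_le _ _ _ _ qN (leq_addr m a).
  by have := N_ge0 (a + m)%N; lra.
by rewrite lerXn2r ?nnegrE ?divr_ge0 // ler_wpM2r ?invr_ge0.
Qed.

Lemma powR_inv_le_of_sqr (P S : R) m : (0 < m)%N -> 0 <= P -> 0 <= S ->
  P ^+ 2 <= (S / m%:R) ^+ m -> P `^ m%:R^-1 <= m%:R `^ (- 2^-1) * Num.sqrt S.
Proof.
move=> m_gt0 P_ge0 S_ge0 PS.
(* P `^ m^-1 = (P ^+ 2) `^ (2 m)^-1 *)
have m_pos : 0 < m%:R :> R by rewrite ltr0n.
have Sm_ge0 : 0 <= S / m%:R by rewrite divr_ge0 ?ler0n.
rewrite (_ : m%:R^-1 = 2%:R * (m%:R * 2)^-1); last by field; rewrite gt_eqF.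
rewrite powRrM powR_mulrn //.
have r_ge0 : 0 <= (m%:R * 2 : R)^-1 by rewrite invr_ge0 mulr_ge0 ?ler0n.
apply: le_trans (ge0_ler_powR r_ge0 _ _ PS) _; rewrite ?nnegrE ?exprn_ge0 //.
rewrite -powR_mulrn // -powRrM.
rewrite (_ : m%:R * (m%:R * 2)^-1 = 2^-1); last by field; rewrite gt_eqF.
rewrite powR12_sqrt // sqrtrM // sqrtrV ?ler0n // powRN powR12_sqrt ?ler0n //.
by rewrite mulrC.
Qed.

End GeometricMeanBound.

Theorem lemma3 (R : realType) (n : nat) (Om : set 'rV[R]_n)
  (k : 'rV[R]_n -> 'rV[R]_n -> R)
  (Hs : set ('rV[R]_n -> R)) (ip : ('rV[R]_n -> R) -> ('rV[R]_n -> R) -> R)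
  (u : 'rV[R]_n -> R) (X : nat -> 'rV[R]_n) (L : nat -> 'I_n)
  (Pi : nat -> ('rV[R]_n -> R) -> ('rV[R]_n -> R)) :
  open Om ->
  sym_kernel_on Om k -> pd_kernel_on Om k ->
  C2_on (Om `*` Om) (fun p : 'rV[R]_n * 'rV[R]_n => k p.1 p.2) ->
  is_RKHS Om k Hs ip -> deriv_reproducing Om k Hs ip ->
  Hs u ->
  orth_projs Om k Hs ip X L Pi ->
  fgreedy Om Pi u X L ->
  forall m : nat, (1 <= m)%N ->
    let a := fun i : nat => (`|pderiv (L i.+1) (err Pi u i) (X i.+1)| : R) in
    let b := fun i : nat => (powerf Om k ip Pi i (X i.+1) (L i.+1) : R) in
    (\prod_(m.+1 <= i < (m.*2).+1) quot0 (a i) (b i)) `^ (m%:R^-1)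
      <= (m%:R) `^ (- 2^-1) * fnorm ip (err Pi u m.+1).
Proof.
move=> _ _ _ _ HR HD Hu HO HG m m_gt0 /=.
have HX i : Om (X i.+1) := (HG i).1.
pose N i := ip (err Pi u i) (err Pi u i).
have N_ge0 i : 0 <= N i := rkhs_pos HR (err_rkhs HR HD HX HO Hu i).
rewrite -addnn -addSn; apply: powR_inv_le_of_sqr => //.
- by apply: prodr_ge0 => i _; exact: (quot0_greedy_ge0 HR HD HX HO Hu).
- exact: N_ge0.
- apply: (prod_sqr_le_telescope _ N) => // i.
  + exact: (quot0_greedy_ge0 HR HD HX HO Hu).
  + exact: (quot0_greedy_sqr_le HR HD HX HO Hu).
Qed.
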